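(* For every integer $s\ge 3$ and every $t\in\{0,1\}$ there exists $C>0$ such that every $K_{s,t}$-free graph $G$ admits a clique cover of size at most $C|G|^{2-1/s}$.
   Context: All graphs are finite and simple; $|G|$ is the number of vertices. A graph is $K_{s,t}$-free if it has no induced subgraph isomorphic to the complete bipartite graph $K_{s,t}$ (for $t=0$ this means no stable set of size $s$). A clique $X$ of $G$ covers an edge $uv$ if $u,v\in X$; a clique cover of $G$ is a collection of cliques of $G$ that together cover all edges of $G$, and its size is the number of cliques in it. *)

From mathcomp Require Import all_boot.
From Stdlib Require Import Reals.
Set Implicit Arguments. Unset Strict Implicit. Unset Printing Implicit Defensive.

Definition simple_graph (T : finType) (e : rel T) : Prop :=
  symmetric e /\ irreflexive e.

Definition stable (T : finType) (e : rel T) (S : {set T}) : Prop :=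
  forall x y, x \in S -> y \in S -> ~~ e x y.

Definition clique (T : finType) (e : rel T) (S : {set T}) : Prop :=
  forall x y, x \in S -> y \in S -> x != y -> e x y.

(* For t = 0 this is exactly a stable set of size s. *)
Definition has_induced_Kst (T : finType) (e : rel T) (s t : nat) : Prop :=
  exists A B : {set T},
    [/\ #|A| = s, #|B| = t, [disjoint A & B],
        stable e A /\ stable e B
      & forall a b, a \in A -> b \in B -> e a b].

Definition Kst_free (T : finType) (e : rel T) (s t : nat) : Prop :=
  ~ has_induced_Kst e s t.

Definition clique_cover (T : finType) (e : rel T) (cs : seq {set T}) : Prop :=
  (forall X, X \in cs -> clique e X) /\
  (forall u v, e u v -> exists2 X, X \in cs & (u \in X) && (v \in X)).

From mathcomp Require Import all_boot.
From Stdlib Require Import Reals Lra.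
(* Reals rebinds [_ ^ _] in nat_scope to Nat.pow; re-importing ssrnat
   restores expn. *)
From mathcomp Require Import ssrnat zify.
Set Implicit Arguments.
Unset Strict Implicit.
Unset Printing Implicit Defensive.

(* In a K_{s,t}-free graph with t <= 1 no neighbourhood N(v) contains a stable
   set of size s.  By the Erdos-Szekeres bound, a vertex set with no stable set
   of size s and at least k^(s-1) vertices contains a k-clique, so removing
   k-cliques greedily covers the vertices of N(v) by at most |N(v)|/k + k^(s-1)
   cliques; adding v to each of them covers every edge at v.  Summing over the
   n vertices gives at most n (n/k + k^(s-1)) <= 2 n^2 / k cliques when
   k^s <= n, and k = floor(n^(1/s)) turns this into 4 n^(2-1/s). *)

Section StableSetsAndCliques.

Variables (T : finType) (e : rel T).
Hypotheses (e_sym : symmetric e) (e_irr : irreflexive e).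

Definition nbhd (x : T) : {set T} := [set y | e x y].

Definition no_stable_of_size (S : {set T}) (s : nat) : Prop :=
  forall A : {set T}, A \subset S -> stable e A -> #|A| != s.

Lemma no_stable_of_size_subset (S S' : {set T}) s :
  S' \subset S -> no_stable_of_size S s -> no_stable_of_size S' s.
Proof. by move=> sS'S noS A sAS'; apply: noS; apply: subset_trans sS'S. Qed.

Lemma stable_set1 x : stable e [set x].
Proof. by move=> y z /set1P -> /set1P ->; rewrite e_irr. Qed.

Lemma stable_setU1 x A :
  stable e A -> {in A, forall y, ~~ e x y} -> stable e (x |: A).
Proof.
move=> stA nxA y z; rewrite !inE => /predU1P[-> | yA] /predU1P[-> | zA].
- by rewrite e_irr.
- exact: nxA.
- by rewrite e_sym; apply: nxA.
- exact: stA.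
Qed.

Lemma clique_set0 : clique e set0.
Proof. by move=> x y; rewrite inE. Qed.

Lemma clique_set1 x : clique e [set x].
Proof. by move=> y z /set1P -> /set1P ->; rewrite eqxx. Qed.

Lemma clique_setU1 x K :
  clique e K -> {in K, forall y, e x y} -> clique e (x |: K).
Proof.
move=> cK xK y z; rewrite !inE => /predU1P[-> | yK] /predU1P[-> | zK].
- by rewrite eqxx.
- by move=> _; apply: xK.
- by move=> _; rewrite e_sym; apply: xK.
- exact: cK.
Qed.

Lemma no_stable_of_size_nonnbhd x (S : {set T}) s :
  x \in S -> no_stable_of_size S s.+1 ->
  no_stable_of_size (S :\ x :\: nbhd x) s.
Proof.
move=> xS noS A sAM stA.
have xA : x \notin A by apply/negP => /(subsetP sAM); rewrite !inE eqxx andbF.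
have := noS (x |: A); rewrite cardsU1 xA eqSS; apply.
  rewrite subUset sub1set xS (subset_trans sAM) //.
  by rewrite (subset_trans (subsetDl _ _)) ?subD1set.
by apply: stable_setU1 => // y /(subsetP sAM); rewrite !inE => /andP[].
Qed.

Lemma ramsey_clique s k (S : {set T}) :
  k ^ s <= #|S| -> no_stable_of_size S s.+1 ->
  exists K : {set T}, [/\ K \subset S, clique e K & #|K| = k].
Proof.
elim: s k S => [|s IHs] k S.
  rewrite expn0 => /card_gt0P[x xS] noS.
  have := noS [set x]; rewrite sub1set xS cards1.
  by move=> /(_ isT (@stable_set1 x)).
elim: k S => [|k IHk] S le_S noS.
  by exists set0; rewrite sub0set cards0; split => //; apply: clique_set0.
have [x xS] : exists x, x \in S.
  by apply/card_gt0P; apply: leq_trans le_S; rewrite expn_gt0.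
pose N := (S :\ x) :&: nbhd x; pose M := S :\ x :\: nbhd x.
have card_S : #|S| = (#|N| + #|M|).+1 by rewrite cardsID (cardsD1 x S) xS.
have [le_M | lt_M] := leqP (k.+1 ^ s) #|M|.
  have [K [sKM cK cardK]] := IHs k.+1 M le_M (no_stable_of_size_nonnbhd xS noS).
  exists K; split => //.
  by rewrite (subset_trans sKM) // (subset_trans (subsetDl _ _)) ?subD1set.
have sNS : N \subset S by rewrite (subset_trans (subsetIl _ _)) ?subD1set.
have [le_N | lt_N] := leqP (k ^ s.+1) #|N|.
  have [K [sKN cK cardK]] := IHk N le_N (no_stable_of_size_subset sNS noS).
  have xK : x \notin K by apply/negP => /(subsetP sKN); rewrite !inE eqxx.
  exists (x |: K); split.
  - by rewrite subUset sub1set xS (subset_trans sKN sNS).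
  - by apply: clique_setU1 => // y /(subsetP sKN); rewrite !inE => /andP[].
  - by rewrite cardsU1 xK cardK.
(* Otherwise |S| >= (k+1)^s + k (k+1)^s exceeds |M| + |N| + 1. *)
have le_pow : k ^ s <= k.+1 ^ s.
  by case: (posnP s) => [-> | s_gt0]; rewrite ?expn0 ?leq_exp2r.
have : k ^ s.+1 <= k * k.+1 ^ s by rewrite expnS leq_mul2l le_pow orbT.
rewrite expnS mulSn in le_S; lia.
Qed.

Lemma clique_vertex_cover s k (S : {set T}) :
  0 < k -> no_stable_of_size S s.+1 ->
  exists cs : seq {set T},
    [/\ {in cs, forall K : {set T}, K \subset S /\ clique e K},
        {in S, forall y, exists2 K, K \in cs & y \in K}
      & k * size cs <= #|S| + k ^ s.+1].
Proof.
move=> k_gt0; elim: {S}_.+1 {-2}S (ltnSn #|S|) => // n IHn S lt_Sn noS.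
have [lt_S | le_S] := ltnP #|S| (k ^ s).
  exists [seq [set y] | y <- enum S]; split.
  - move=> K /mapP[y]; rewrite mem_enum => yS ->.
    by rewrite sub1set yS; split; last exact: clique_set1.
  - by move=> y yS; exists [set y]; rewrite ?set11 ?map_f ?mem_enum.
  - rewrite size_map -cardE expnS (leq_trans _ (leq_addl _ _)) //.
    by rewrite leq_mul2l ltnW ?orbT.
have [K [sKS cK cardK]] := ramsey_clique le_S noS.
have card_SK : #|S :\: K| = #|S| - k by rewrite cardsDS // cardK.
have le_kS : k <= #|S| by rewrite -cardK subset_leq_card.
have [|cs [sub_cs cover_cs size_cs]] :=
  IHn (S :\: K) _ (no_stable_of_size_subset (subsetDl S K) noS).
  by rewrite card_SK; lia.
exists (K :: cs); split.
- move=> X; rewrite inE => /predU1P[-> // | Xcs].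
  by have [sXSK cX] := sub_cs X Xcs; rewrite (subset_trans sXSK) ?subsetDl.
- move=> y yS; have [yK | yNK] := boolP (y \in K).
    by exists K; rewrite ?mem_head.
  have [X Xcs yX] : exists2 X, X \in cs & y \in X.
    by apply: cover_cs; rewrite inE yNK.
  by exists X; rewrite // inE Xcs orbT.
- by move: size_cs; rewrite card_SK /= mulnS; lia.
Qed.

Lemma star_clique_cover s k v :
  0 < k -> no_stable_of_size (nbhd v) s.+1 ->
  exists cs : seq {set T},
    [/\ {in cs, forall X, clique e X},
        forall u, e v u -> exists2 X, X \in cs & (u \in X) && (v \in X)
      & k * size cs <= #|T| + k ^ s.+1].
Proof.
move=> k_gt0 noN.
have [cs [sub_cs cover_cs size_cs]] := clique_vertex_cover k_gt0 noN.
exists [seq v |: K | K <- cs]; split.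
- move=> X /mapP[K Kcs ->]; have [sKN cK] := sub_cs K Kcs.
  by apply: clique_setU1 => // y /(subsetP sKN); rewrite inE.
- move=> u evu.
  have [K Kcs uK] : exists2 K, K \in cs & u \in K.
    by apply: cover_cs; rewrite inE.
  by exists (v |: K); rewrite ?map_f // !inE uK eqxx orbT.
- by rewrite size_map (leq_trans size_cs) // leq_add2r max_card.
Qed.

Lemma exists_small_clique_cover s k :
  0 < k -> (forall v, no_stable_of_size (nbhd v) s.+1) ->
  exists cs : seq {set T},
    clique_cover e cs /\ k * size cs <= #|T| * (#|T| + k ^ s.+1).
Proof.
move=> k_gt0 noN.
have /fin_all_exists[star star_cover] :=
  fun v => star_clique_cover k_gt0 (noN v).
exists (flatten [seq star v | v in T]); split; first split.
- by move=> X /flatten_mapP[v _]; have [cl _ _] := star_cover v; apply: cl.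
- move=> u v euv; have [_ cov _] := star_cover u; have [X Xu uvX] := cov v euv.
  exists X; last by rewrite andbC.
  by apply/flatten_mapP; exists u; rewrite ?mem_enum.
rewrite size_flatten sumnE big_map big_image big_distrr -sum_nat_const.
by apply: leq_sum => v _; have [_ _] := star_cover v.
Qed.

Lemma Kst_free_no_stable_nbhd s t v :
  t <= 1 -> Kst_free e s t -> no_stable_of_size (nbhd v) s.
Proof.
move=> le_t1 free A sAN stA; apply/eqP => cardA; apply: free.
have evA : {in A, forall a, e v a} by move=> a /(subsetP sAN); rewrite inE.
case: t le_t1 => [_ | [_ | //]].
- exists A, set0; split => //; first exact: cards0.
  + by rewrite -setI_eq0 setI0.
  + by split => // x y; rewrite inE.
  + by move=> a b _; rewrite inE.
- exists A, [set v]; split => //; first exact: cards1.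
  + by rewrite disjoint_sym disjoints1; apply/negP => /evA; rewrite e_irr.
  + by split => //; apply: stable_set1.
  + by move=> a b aA /set1P ->; rewrite e_sym evA.
Qed.

End StableSetsAndCliques.

Lemma nat_root_bracket s n :
  0 < s -> 0 < n -> exists k, [/\ 0 < k, k ^ s <= n & n < k.+1 ^ s].
Proof.
move=> s_gt0; elim: n => [// | [|n] IHn _].
  exists 1; split => //; first by rewrite exp1n.
  exact: leq_ltn_trans s_gt0 (ltn_expl _ _).
have [k [k_gt0 le_kn lt_nk]] := IHn isT.
have [lt_nk' | le_kn'] := ltnP n.+2 (k.+1 ^ s).
  by exists k; split => //; apply: leq_trans le_kn _.
have eq_nk : n.+2 = k.+1 ^ s by apply/eqP; rewrite eqn_leq lt_nk le_kn'.
by exists k.+1; split; rewrite // eq_nk ltn_exp2r.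
Qed.

Lemma INR_expn m n : INR (m ^ n) = (INR m ^ n)%R.
Proof. by elim: n => [|n IHn]; rewrite ?expn0 // expnS mult_INR IHn. Qed.

Section RealBounds.
Local Open Scope R_scope.

Lemma Rpower_root_le (s : nat) (N x : R) :
  (0 < s)%N -> 0 < N -> 0 < x -> N <= x ^ s -> Rpower N (1 / INR s) <= x.
Proof.
move=> s_gt0 N_gt0 x_gt0 le_N.
have INR_s_gt0 : 0 < INR s by apply: lt_0_INR; apply/ltP.
have root_x : Rpower (x ^ s) (1 / INR s) = x.
  rewrite -Rpower_pow // Rpower_mult (_ : INR s * (1 / INR s) = 1) ?Rpower_1 //.
  by field; lra.
rewrite -[X in _ <= X]root_x; apply: Rle_Rpower_l; last by split.
by apply: Rlt_le; apply: Rdiv_lt_0_compat; lra.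
Qed.

Lemma Rpower_two_sub (N r : R) : 0 < N -> Rpower N (2 - r) = N * N / Rpower N r.
Proof.
move=> N_gt0; have Rpower_gt0 : 0 < Rpower N r by apply: exp_pos.
rewrite /Rminus Rpower_plus Rpower_Ropp (_ : 2 = INR 2) ?Rpower_pow //=.
by field; lra.
Qed.

Lemma le_Rpower_of_root_bound (s : nat) (N K Z : R) :
  (0 < s)%N -> 0 < N -> 0 < K -> 0 <= Z ->
  N <= (2 * K) ^ s -> K * Z <= 2 * (N * N) -> Z <= 4 * Rpower N (2 - 1 / INR s).
Proof.
move=> s_gt0 N_gt0 K_gt0 Z_ge0 le_N le_KZ.
have le_root : Rpower N (1 / INR s) <= 2 * K.
  by apply: Rpower_root_le => //; lra.
have root_gt0 : 0 < Rpower N (1 / INR s) by apply: exp_pos.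
rewrite Rpower_two_sub //; set P := Rpower N (1 / INR s) in le_root root_gt0 *.
apply: (Rmult_le_reg_r P) => //.
rewrite (_ : 4 * (N * N / P) * P = 4 * (N * N)); first nra.
by field; lra.
Qed.

End RealBounds.

Theorem mainTheorem6 :
  forall (s t : nat), 3 <= s -> t <= 1 ->
  exists C : R, (0 < C)%R /\
    forall (T : finType) (e : rel T),
      simple_graph e -> Kst_free e s t ->
      exists cs : seq {set T},
        clique_cover e cs /\
        (INR (size cs) <= C * Rpower (INR #|T|) (2 - 1 / INR s))%R.
Proof.
move=> s t le3s le_t1; exists 4%R; split; first lra.
move=> T e [e_sym e_irr]; case: s le3s => // s _ free.
have noN v : no_stable_of_size e (nbhd e v) s.+1 :=
  Kst_free_no_stable_nbhd e_sym e_irr le_t1 free.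
have [T_empty | T_gt0] := posnP #|T|.
  exists [::]; split.
    by split=> // u v _; move: T_empty; rewrite (cardD1 u).
  by apply: Rmult_le_pos; [lra | apply: Rlt_le; apply: exp_pos].
have [k [k_gt0 le_kn lt_nk]] := nat_root_bracket (ltn0Sn s) T_gt0.
have [cs [cover size_cs]] := exists_small_clique_cover e_sym e_irr k_gt0 noN.
have le_cs : k * size cs <= 2 * (#|T| * #|T|).
  rewrite (leq_trans size_cs) // mul2n -addnn -mulnDr.
  by rewrite leq_mul2l leq_add2l le_kn orbT.
have le_n : #|T| <= (2 * k) ^ s.+1.
  by rewrite (leq_trans (ltnW lt_nk)) // leq_exp2r //; lia.
exists cs; split => //; apply: (le_Rpower_of_root_bound (K := INR k)) => //.
- by apply: lt_0_INR; apply/ltP.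
- by apply: lt_0_INR; apply/ltP.
- exact: pos_INR.
- by rewrite (_ : 2%R = INR 2) // -mult_INR -INR_expn; apply: le_INR; apply/leP.
- by rewrite (_ : 2%R = INR 2) // -!mult_INR; apply: le_INR; apply/leP.
Qed.
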